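(* Let $F$ be an integral form, and assume that $F$ has a simple linear factor over $\mathbb{Q}_p$, i.e. there is a non-zero linear form $L$ with coefficients in $\mathbb{Q}_p$ such that $L$ divides $F$ but $L^2$ does not divide $F$ in $\mathbb{Q}_p[x_0,\dots,x_r]$. Then $R(F)$ is dense in $\mathbb{Q}_p$.
   Context: An integral form is a homogeneous polynomial with integer coefficients. For an integral form $F$ in $r+1$ variables, $R(F)=\{F(\overline{x})/F(\overline{y}) : \overline{x},\overline{y}\in\mathbb{Z}^{r+1},\ F(\overline{y})\neq 0\}$; density is in the $p$-adic topology. *)

From HB Require Import structures.
From mathcomp Require Import all_boot all_order all_algebra.
From mathcomp Require Import mpoly.
Set Implicit Arguments. Unset Strict Implicit. Unset Printing Implicit Defensive.
Import Order.TTheory GRing.Theory Num.Theory.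
Local Open Scope ring_scope.

Definition padic_val (p : nat) (q : rat) : int :=
  (logn p `|numq q|%N)%:Z - (logn p (`|denq q|%N))%:Z.

Definition padic_abs (p : nat) (q : rat) : rat :=
  if q == 0 then 0 else (p%:R : rat) ^ (- padic_val p q).

(* (K, abs) is a model of the field Q_p: a field with a non-archimedean
   absolute value extending |.|_p on Q, in which Q is dense and which is
   complete.  Such a field is the completion of (Q,|.|_p), unique up to
   isometric isomorphism.  Absolute values take values in p^Z ∪ {0} ⊂ Q,
   so we let them be rational-valued. *)
Record is_Qp (p : nat) (K : fieldType) (abs : K -> rat) : Prop := {
  Qp_abs_ge0 : forall x, 0 <= abs x;
  Qp_abs_eq0 : forall x, abs x = 0 <-> x = 0;
  Qp_absM : forall x y, abs (x * y) = abs x * abs y;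
  Qp_abs_ultra : forall x y, abs (x + y) <= Num.max (abs x) (abs y);
  Qp_abs_rat : forall q : rat, abs (ratr q) = padic_abs p q;
  Qp_Q_dense : forall (x : K) (eps : rat), 0 < eps ->
      exists q : rat, abs (x - ratr q) < eps;
  Qp_complete : forall u : nat -> K,
      (forall eps : rat, 0 < eps -> exists N, forall m n, (N <= m)%N -> (N <= n)%N ->
          abs (u m - u n) < eps) ->
      exists l : K, forall eps : rat, 0 < eps -> exists N, forall n, (N <= n)%N ->
          abs (u n - l) < eps
}.

(* R(F) = { F(x)/F(y) : x, y in Z^(r+1), F(y) <> 0 } as a subset of Q *)
Definition ratio_set (r : nat) (F : {mpoly int[r.+1]}) : rat -> Prop :=
  fun q => exists x y : 'I_r.+1 -> int,
    let FQ := map_mpoly (fun z : int => (z%:~R : rat)) F in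
    FQ.@[fun i => (y i)%:~R] != 0 /\
    q = FQ.@[fun i => (x i)%:~R] / FQ.@[fun i => (y i)%:~R].

Definition dense_in (K : fieldType) (abs : K -> rat) (S : rat -> Prop) : Prop :=
  forall (z : K) (eps : rat), 0 < eps -> exists q, S q /\ abs (z - ratr q) < eps.

Definition mdivides (n : nat) (R : ringType) (a b : {mpoly R[n]}) : Prop :=
  exists c : {mpoly R[n]}, b = a * c.

(* Over Q_p write F = L C with L a linear form that does not divide C.  As Q_p is
   infinite, C does not vanish identically on the hyperplane L = 0: pick y there with
   C(y) <> 0 and a coordinate j on which L depends.  Along the line y + t e_j the form L
   equals L_j t, so F(y + s z e_j) / F(y + s e_j) = z C(y + s z e_j) / C(y + s e_j),
   which tends to z as s -> 0.  By continuity of F both points may be replaced by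
   nearby rational points, and by homogeneity the rational points may be scaled to
   integral ones without changing the ratio. *)

From HB Require Import structures.
From mathcomp Require Import all_boot all_order all_algebra.
From mathcomp Require Import mpoly.
From mathcomp Require Import ring lra.
Import Order.TTheory GRing.Theory Num.Theory.
Local Open Scope ring_scope.
Set Implicit Arguments. Unset Strict Implicit. Unset Printing Implicit Defensive.

Lemma map_mpoly_meval n (R S : comNzRingType) (f : {rmorphism R -> S})
    (P : {mpoly R[n]}) (v : 'I_n -> R) :
  f P.@[v] = (map_mpoly f P).@[fun i => f (v i)].
Proof.
elim/mpolyind: P => [|c m P _ _ IH]; first by rewrite (raddf0 (map_mpoly f)) !meval0 rmorph0.
rewrite !raddfD /= IH map_mpolyZ map_mpolyX !mevalZ !mevalX rmorphM rmorph_prod.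
by congr (_ * _ + _); apply: eq_bigr => i _; rewrite rmorphXn.
Qed.

Lemma map_mpoly_dhomog n (R S : comNzRingType) (f : {additive R -> S})
    (P : {mpoly R[n]}) d :
  P \is d.-homog -> map_mpoly f P \is d.-homog.
Proof.
move=> /dhomogP hP; apply/dhomogP => m; rewrite mcoeff_msupp mcoeff_map_mpoly => hm.
by apply: hP; rewrite mcoeff_msupp; apply: contraNneq hm => ->; rewrite raddf0.
Qed.

Lemma meval_dhomogZ n (R : comNzRingType) d (P : {mpoly R[n]}) (c : R) (v : 'I_n -> R) :
  P \is d.-homog -> P.@[fun i => c * v i] = c ^+ d * P.@[v].
Proof.
move=> /dhomogP hP; rewrite !mevalE mulr_sumr; apply: eq_big_seq => m /hP dm.
under eq_bigr do rewrite exprMn.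
by rewrite big_split /= prodrXr mulrCA -dm -mdegE.
Qed.

Lemma dhomog1_mpolyE n (R : comNzRingType) (L : {mpoly R[n]}) :
  L \is 1.-homog -> L = \sum_i L@_U_(i) *: 'X_i.
Proof.
move=> hL; apply/mpolyP => m; rewrite raddf_sum /=.
under eq_bigr do rewrite mcoeffZ mcoeffX.
have [/eqP/mdeg1P [k /eqP ->]|dm] := eqVneq (mdeg m) 1%N.
  rewrite (bigD1 k) //= eqxx mulr1 big1 ?addr0 // => i ik.
  by rewrite eq_mnm1 (negbTE ik) mulr0.
rewrite (dhomog_nemf_coeff hL dm) big1 // => i _.
have [mi|] := eqVneq U_(i)%MM m; last by rewrite mulr0.
by rewrite -mi mdeg1 eqxx in dm.
Qed.

Lemma meval_dhomog1 n (R : comNzRingType) (L : {mpoly R[n]}) (v : 'I_n -> R) :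
  L \is 1.-homog -> L.@[v] = \sum_i L@_U_(i) * v i.
Proof.
move=> /dhomog1_mpolyE {1}->; rewrite raddf_sum /=.
by apply: eq_bigr => i _; rewrite mevalZ mevalXU.
Qed.

Lemma mpoly_ring_ind n (R : comNzRingType) (S : {mpoly R[n]} -> Prop) :
  (forall c, S c%:MP) -> (forall i, S 'X_i) ->
  (forall P Q, S P -> S Q -> S (P + Q)) -> (forall P Q, S P -> S Q -> S (P * Q)) ->
  forall P, S P.
Proof.
move=> SC SX SD SM; elim/mpolyind => [|c m P _ _ SP]; first by rewrite -mpolyC0.
apply: (SD) SP; rewrite -mul_mpolyC mpolyXE_id; apply: (SM) => //.
apply: big_ind => [||i _]; [by rewrite -mpolyC1 | exact: (SM) |].
by elim: (m i) => [|k IH]; [rewrite expr0 -mpolyC1 | rewrite exprS; apply: SM].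
Qed.

Lemma mdivides_sub_comp_mpoly n (R : comNzRingType) (L : {mpoly R[n]})
    (lq : n.-tuple {mpoly R[n]}) :
  (forall i, mdivides L ('X_i - tnth lq i)) ->
  forall P, mdivides L (P - (P \mPo lq)).
Proof.
move=> dvdX; apply: mpoly_ring_ind => [c|i|P Q [D eP] [E eQ]|P Q [D eP] [E eQ]].
- by exists 0; rewrite comp_mpolyC subrr mulr0.
- by rewrite comp_mpolyXU -tnth_nth.
- by exists (D + E); rewrite comp_mpolyD mulrDr -eP -eQ; ring.
have -> : (P * Q) \mPo lq = (P \mPo lq) * (Q \mPo lq).
  exact: (comp_mpoly_is_multiplicative lq).1.
exists (P * E + D * (Q \mPo lq)).
by rewrite mulrDr mulrCA -eQ mulrA -eP; ring.
Qed.

Lemma base_expansion_inj N n (f g : 'I_n -> nat) :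
  (forall i, f i < N)%N -> (forall i, g i < N)%N ->
  (\sum_i f i * N ^ i = \sum_i g i * N ^ i)%N -> f =1 g.
Proof.
elim: n f g => [|n IH] f g fN gN + i; first by case: i.
have expand (h : 'I_n.+1 -> nat) :
    (\sum_i h i * N ^ i = h ord0 + N * \sum_(i < n) h (lift ord0 i) * N ^ i)%N.
  rewrite big_ord_recl muln1 big_distrr /=; congr (_ + _)%N.
  by apply: eq_bigr => k _; rewrite expnS mulnCA.
rewrite !expand => e.
have e0 : f ord0 = g ord0.
  by have := congr1 (modn^~ N) e; rewrite /= !(addnC (_ ord0)) !(mulnC N) !modnMDl !modn_small.
have N_gt0 : (0 < N)%N by apply: leq_ltn_trans (fN ord0).
move: e; rewrite e0 => /addnI /eqP; rewrite eqn_pmul2l // => /eqP e.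
have {}IH := IH _ _ (fun k => fN _) (fun k => gN _) e.
by case: (unliftP ord0 i) => [k ->|->].
Qed.

Lemma rat_common_denominator n (a : 'I_n -> rat) :
  exists2 D : int, D != 0 & forall i, D%:~R * a i \is a Num.int.
Proof.
exists (\prod_i denq (a i)) => [|i].
  by rewrite prodf_seq_neq0; apply/allP => i _; rewrite denq_neq0.
by rewrite (bigD1 i) //= intrM mulrAC [_ * a i]mulrC -numqE rpredM ?rpred_int.
Qed.

Lemma ratio_set_dhomog r (F : {mpoly int[r.+1]}) d (a b : 'I_r.+1 -> rat) :
  F \is d.-homog ->
  (map_mpoly (fun z : int => z%:~R : rat) F).@[b] != 0 ->
  ratio_set F ((map_mpoly (fun z : int => z%:~R : rat) F).@[a] /
               (map_mpoly (fun z : int => z%:~R : rat) F).@[b]).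
Proof.
set FQ := map_mpoly _ F => Fd Fb.
have FQd : FQ \is d.-homog by apply: map_mpoly_dhomog.
have [Da Da0 aD] := rat_common_denominator a.
have [Db Db0 bD] := rat_common_denominator b.
pose D : rat := (Da * Db)%:~R.
have D0 : D != 0 by rewrite intr_eq0 mulf_neq0.
have /fin_all_exists [x xa] : forall i, exists k : int, D * a i = k%:~R.
  by move=> i; apply/intrP; rewrite /D intrM mulrAC rpredM ?rpred_int.
have /fin_all_exists [y yb] : forall i, exists k : int, D * b i = k%:~R.
  by move=> i; apply/intrP; rewrite /D intrM -mulrA rpredM ?rpred_int.
have FQx : FQ.@[fun i => (x i)%:~R] = D ^+ d * FQ.@[a].
  by rewrite -meval_dhomogZ //; apply: meval_eq => i; rewrite xa.
have FQy : FQ.@[fun i => (y i)%:~R] = D ^+ d * FQ.@[b].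
  by rewrite -meval_dhomogZ //; apply: meval_eq => i; rewrite yb.
exists x, y; rewrite /= -/FQ FQx FQy; split; first by rewrite mulf_neq0 ?expf_neq0.
by rewrite -mulf_div mulfV ?expf_neq0 ?mul1r.
Qed.

Section Pchar0.
Variable K : fieldType.
Hypothesis K0 : [pchar K] =i pred0.

Lemma pchar0_intr_eq0 (z : int) : (z%:~R == 0 :> K) = (z == 0).
Proof.
have natr_eq0 : forall k, (k%:R == 0 :> K) = (k == 0)%N by apply/pcharf0P.
by case: z => k; rewrite ?NegzE ?mulrNz ?oppr_eq0 natr_eq0.
Qed.

Lemma pchar0_natr_inj : injective (fun k : nat => k%:R : K).
Proof.
move=> i j /eqP; rewrite -subr_eq0 !pmulrn -intrB pchar0_intr_eq0 subr_eq0.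
by move=> /eqP [].
Qed.

Lemma pchar0_poly_nonroot (Q : {poly K}) : Q != 0 -> exists t, Q.[t] != 0.
Proof.
move=> Q0; pose s := [seq i%:R : K | i <- iota 0 (size Q)].
have : ~~ all (root Q) s.
  apply/negP => roots_s.
  have := max_poly_roots Q0 roots_s.
  rewrite map_inj_uniq ?iota_uniq; last exact: pchar0_natr_inj.
  by rewrite size_map size_iota ltnn => /(_ isT).
by case/allPn => t _ Qt; exists t.
Qed.

(* Kronecker substitution X_i |-> t ^+ (N ^ i), injective on monomials of degree < N. *)
Lemma pchar0_mpoly_nonroot n (P : {mpoly K[n]}) : P != 0 -> exists v, P.@[v] != 0.
Proof.
move=> P0; pose N := msize P.
pose e (m : 'X_{1..n}) := (\sum_i m i * N ^ i)%N.
pose Q : {poly K} := \sum_(m <- msupp P) P@_m *: 'X^(e m).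
have Qt t : Q.[t] = P.@[fun i => t ^+ (N ^ i)].
  rewrite horner_sum mevalE; apply: eq_bigr => m _.
  rewrite hornerZ hornerXn -prodrXr; congr (_ * _).
  by apply: eq_bigr => i _; rewrite -exprM mulnC.
have [m0 m0P] : exists m0, m0 \in msupp P.
  by case: (msupp P) (msupp_eq0 P) => [|m s] /=; [rewrite (negbTE P0) | exists m; rewrite inE eqxx].
have ltN m i : m \in msupp P -> (m i < N)%N.
  move=> mP; apply: leq_ltn_trans (msize_mdeg_lt mP).
  by rewrite mdegE (bigD1 i) //= leq_addr.
have QP : Q`_(e m0) = P@_m0.
  rewrite coef_sum (bigD1_seq m0) ?msupp_uniq //= coefZ coefXn eqxx mulr1.
  rewrite big1_seq ?addr0 // => m /andP [mm0 mP]; rewrite coefZ coefXn.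
  case: eqVneq => [em|]; last by rewrite mulr0.
  have mm0' : m = m0.
    by apply/mnmP => i; rewrite (base_expansion_inj (ltN m0^~ m0P) (ltN m^~ mP) em i).
  by rewrite mm0' eqxx in mm0.
have Q0 : Q != 0.
  by apply: contraTneq m0P => Q0; rewrite mcoeff_msupp negbK -QP Q0 coef0.
have [t Qt0] := pchar0_poly_nonroot Q0.
by exists (fun i => t ^+ (N ^ i)); rewrite -Qt.
Qed.

Lemma pchar0_linear_root_nonroot n (L C : {mpoly K[n]}) :
  L \is 1.-homog -> L != 0 -> ~ mdivides L C ->
  exists y j, [/\ L@_U_(j) != 0, L.@[y] = 0 & C.@[y] != 0].
Proof.
move=> L1 L0 LnC.
have [j Lj|Lj0] := pickP (fun i => L@_U_(i)%MM != 0); last first.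
  case/negP: L0; rewrite (dhomog1_mpolyE L1) big1 // => i _.
  by move/negbFE/eqP: (Lj0 i) ->; rewrite scale0r.
set a := L@_U_(j)%MM in Lj *.
(* Project along the j-th axis onto the hyperplane L = 0. *)
pose lq := [tuple 'X_i - (if i == j then a^-1 *: L else 0) | i < n].
have dvdX i : mdivides L ('X_i - tnth lq i).
  exists (if i == j then a^-1%:MP else 0).
  rewrite tnth_mktuple opprB addrC subrK.
  by case: eqP => _; rewrite ?mulr0 // mulrC mul_mpolyC.
have [w Cw] : exists w, (C \mPo lq).@[w] != 0.
  apply: pchar0_mpoly_nonroot; apply/eqP => C0; apply: LnC.
  by rewrite -[C]subr0 -C0; apply: mdivides_sub_comp_mpoly.
exists (fun i => (tnth lq i).@[w]), j; split => //; last by rewrite -comp_mpoly_meval.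
rewrite meval_dhomog1 //.
under eq_bigr do rewrite tnth_mktuple mevalB mevalXU mulrBr.
rewrite sumrB -meval_dhomog1 // (bigD1 j) //= eqxx big1 => [|i /negbTE ->]; last first.
  by rewrite meval0 mulr0.
by rewrite addr0 mevalZ mulrA mulfV // mul1r subrr.
Qed.

Lemma pchar0_ratr_frac (a b : int) : ratr (a%:~R / b%:~R) = a%:~R / b%:~R :> K.
Proof.
case: divqP => [_|k x k0]; first by rewrite /ratr /= !mulr0z invr0 mulr0 mul0r.
by rewrite /ratr !intrM -mulf_div mulfV ?mul1r // pchar0_intr_eq0.
Qed.

Lemma pchar0_den_neq0 (x : rat) : (denq x)%:~R != 0 :> K.
Proof. by rewrite pchar0_intr_eq0 denq_neq0. Qed.

Lemma pchar0_ratrB : zmod_morphism (@ratr K).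
Proof.
move=> x y; have denq0 z := pchar0_den_neq0 z.
have -> : x - y = (numq x * denq y - numq y * denq x)%:~R / (denq x * denq y)%:~R.
  rewrite intrB !intrM !numqE; field.
  by rewrite !intr_eq0 !denq_neq0.
rewrite pchar0_ratr_frac /ratr intrB !intrM; field.
by rewrite denq0 denq0.
Qed.

Lemma pchar0_ratrM : monoid_morphism (@ratr K).
Proof.
split=> [|x y]; first by rewrite /ratr divr1.
have denq0 z := pchar0_den_neq0 z.
have -> : x * y = (numq x * numq y)%:~R / (denq x * denq y)%:~R.
  rewrite !intrM !numqE; field.
  by rewrite !intr_eq0 !denq_neq0.
rewrite pchar0_ratr_frac /ratr !intrM; field.
by rewrite denq0 denq0.
Qed.

(* The library registers ratr as a morphism only into a numFieldType. *)
Definition pchar0_ratr : {rmorphism rat -> K} :=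
  HB.pack (@ratr K) (GRing.isZmodMorphism.Build _ _ _ pchar0_ratrB)
    (GRing.isMonoidMorphism.Build _ _ _ pchar0_ratrM).

Lemma pchar0_ratr_meval n (F : {mpoly int[n]}) (a : 'I_n -> rat) :
  ratr (map_mpoly (fun z : int => z%:~R : rat) F).@[a] =
  (map_mpoly (fun z : int => z%:~R : K) F).@[fun i => ratr (a i)].
Proof.
rewrite -[ratr _]/(pchar0_ratr _) map_mpoly_meval; congr meval.
by apply/mpolyP => m; rewrite !mcoeff_map_mpoly; apply: ratr_int.
Qed.

End Pchar0.

Section PadicField.
Variables (p : nat) (K : fieldType) (abs : K -> rat).
Hypotheses (p_prime : prime p) (K_Qp : is_Qp p abs).

Lemma abs_ge0 x : 0 <= abs x. Proof. exact: Qp_abs_ge0 K_Qp x. Qed.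

Lemma abs_eq0 x : (abs x == 0) = (x == 0).
Proof. by apply/eqP/eqP; case: (Qp_abs_eq0 K_Qp x). Qed.

Lemma abs0 : abs 0 = 0.
Proof. by apply/eqP; rewrite abs_eq0. Qed.

Lemma abs_gt0 x : x != 0 -> 0 < abs x.
Proof. by rewrite lt_def abs_eq0 abs_ge0 andbT. Qed.

Lemma absM x y : abs (x * y) = abs x * abs y. Proof. exact: Qp_absM K_Qp x y. Qed.

Lemma abs1 : abs 1 = 1.
Proof.
have abs1_neq0 : abs 1 != 0 by rewrite abs_eq0 oner_eq0.
by apply: (mulfI abs1_neq0); rewrite -absM !mulr1.
Qed.

Lemma absN x : abs (- x) = abs x.
Proof.
suff absN1 : abs (-1) = 1 by rewrite -mulN1r absM absN1 mul1r.
apply/eqP; rewrite -(eqrXn2 (_ : 0 < 2)%N) ?abs_ge0 //.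
by rewrite expr1n expr2 -absM mulrNN mulr1 abs1.
Qed.

Lemma absB x y : abs (x - y) = abs (y - x).
Proof. by rewrite -absN opprB. Qed.

Lemma absV x : abs x^-1 = (abs x)^-1.
Proof.
have [->|x0] := eqVneq x 0; first by rewrite invr0 abs0 invr0.
have ax0 : abs x != 0 by rewrite abs_eq0.
by apply: (mulfI ax0); rewrite -absM !mulfV ?abs1.
Qed.

Lemma abs_add_le x y e : abs x <= e -> abs y <= e -> abs (x + y) <= e.
Proof. by move=> xe ye; apply: le_trans (Qp_abs_ultra K_Qp x y) _; rewrite ge_max xe. Qed.

Lemma abs_add_lt x y e : abs x < e -> abs y < e -> abs (x + y) < e.
Proof. by move=> xe ye; apply: le_lt_trans (Qp_abs_ultra K_Qp x y) _; rewrite gt_max xe. Qed.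

Lemma abs_eq_of_lt x y : abs (x - y) < abs y -> abs x = abs y.
Proof.
move=> xy; apply/eqP; rewrite eq_le; apply/andP; split.
  by rewrite -[x](subrK y); apply: abs_add_le; rewrite // ltW.
rewrite leNgt; apply/negP => xy'.
have : abs ((y - x) + x) < abs y by apply: abs_add_lt; rewrite // absB.
by rewrite subrK ltxx.
Qed.

Lemma padic_abs_neq0 q : q != 0 -> padic_abs p q != 0.
Proof.
by move=> q0; rewrite /padic_abs (negbTE q0) expfz_neq0 // pnatr_eq0 -lt0n prime_gt0.
Qed.

Lemma Qp_pchar0 : [pchar K] =i pred0.
Proof.
apply/pcharf0P => k; apply/idP/idP => [|/eqP ->]; last by rewrite eqxx.
apply: contraTT => k0; rewrite -ratr_nat -abs_eq0 (Qp_abs_rat K_Qp k%:R).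
by rewrite padic_abs_neq0 // pnatr_eq0.
Qed.

Lemma abs_natr_p : abs p%:R = p%:R^-1.
Proof.
have p0 : p%:R != 0 :> rat by rewrite pnatr_eq0 -lt0n prime_gt0.
rewrite -[p%:R : K]ratr_nat (Qp_abs_rat K_Qp p%:R) /padic_abs (negbTE p0) /padic_val.
rewrite -[p%:R]/(p%:Z%:~R) numq_int denq_int /= logn1.
by rewrite logn_prime // eqxx subr0 exprN1.
Qed.

Lemma exists_abs_lt b : 0 < b -> exists2 s : K, s != 0 & abs s < b.
Proof.
move=> b0; pose N := Num.Def.archi_bound b^-1.
have bN : b^-1 < N%:R by apply: archi_boundP; rewrite invr_ge0 ltW.
have p0 : p%:R != 0 :> K by rewrite -abs_eq0 abs_natr_p invr_eq0 pnatr_eq0 -lt0n prime_gt0.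
exists (p%:R ^+ N); first by rewrite expf_neq0.
have absX k : abs (p%:R ^+ k) = p%:R^-1 ^+ k.
  by elim: k => [|k IH]; rewrite ?abs1 // !exprS absM IH abs_natr_p.
rewrite absX exprVn -natrX -[b]invrK ltf_pV2 ?posrE ?invr_gt0 ?ltr0n ?expn_gt0 ?prime_gt0 //.
by apply: lt_trans bN _; rewrite ltr_nat ltn_expl ?prime_gt1.
Qed.

Definition cont_at n (f : ('I_n -> K) -> K) (y : 'I_n -> K) : Prop :=
  forall eps, 0 < eps -> exists2 d, 0 < d &
    forall w, (forall i, abs (w i - y i) < d) -> abs (f w - f y) < eps.

Lemma cont_at2 n (f g : ('I_n -> K) -> K) y e1 e2 :
  cont_at f y -> cont_at g y -> 0 < e1 -> 0 < e2 ->
  exists2 d, 0 < d & forall w, (forall i, abs (w i - y i) < d) ->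
    abs (f w - f y) < e1 /\ abs (g w - g y) < e2.
Proof.
move=> fy gy /fy [d1 d10 near1] /gy [d2 d20 near2].
exists (Num.min d1 d2) => [|w wy]; first by rewrite lt_min d10.
by split; [apply: near1 | apply: near2] => i; have := wy i; rewrite lt_min => /andP[].
Qed.

Lemma cont_atD n (f g : ('I_n -> K) -> K) y :
  cont_at f y -> cont_at g y -> cont_at (fun w => f w + g w) y.
Proof.
move=> fy gy eps eps0; have [d d0 near] := cont_at2 fy gy eps0 eps0.
exists d => // w /near [fw gw].
by rewrite opprD addrACA; apply: abs_add_lt.
Qed.

Lemma cont_atM n (f g : ('I_n -> K) -> K) y :
  cont_at f y -> cont_at g y -> cont_at (fun w => f w * g w) y.
Proof.
move=> fy gy eps eps0.
have a0 := abs_ge0 (f y); have b0 := abs_ge0 (g y).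
have a1 : 0 < abs (f y) + 1 by lra.
have b1 : 0 < abs (g y) + 1 by lra.
have e1 : 0 < Num.min 1 (eps / (abs (g y) + 1)) by rewrite lt_min ltr01 divr_gt0.
have [d d0 near] := cont_at2 fy gy e1 (divr_gt0 eps0 a1).
exists d => // w /near []; rewrite lt_min => /andP [fw1 fw] gw.
have fwa : abs (f w) <= abs (f y) + 1.
  by rewrite -[f w](subrK (f y)); apply: abs_add_le; lra.
rewrite !ltr_pdivlMr // in fw gw.
have -> : f w * g w - f y * g y = f w * (g w - g y) + (f w - f y) * g y by ring.
apply: abs_add_lt; rewrite absM.
  by apply: le_lt_trans gw; rewrite mulrC ler_wpM2l ?abs_ge0.
by apply: le_lt_trans fw; rewrite ler_wpM2l ?abs_ge0 ?lerDl.
Qed.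

Lemma cont_at_meval n (P : {mpoly K[n]}) y : cont_at (fun w => P.@[w]) y.
Proof.
elim/mpoly_ring_ind: P => [c|i|P Q Py Qy|P Q Py Qy].
- by move=> eps eps0; exists 1 => // w _; rewrite !mevalC subrr abs0.
- by move=> eps eps0; exists eps => // w; rewrite !mevalXU.
- by move=> eps /(cont_atD Py Qy) [d d0 near]; exists d => // w; rewrite !mevalD; apply: near.
- by move=> eps /(cont_atM Py Qy) [d d0 near]; exists d => // w; rewrite !mevalM; apply: near.
Qed.

Lemma div_near x0 y0 eps : y0 != 0 -> 0 < eps ->
  exists2 d, 0 < d & forall x y, abs (x - x0) < d -> abs (y - y0) < d ->
    y != 0 /\ abs (x / y - x0 / y0) < eps.
Proof.
move=> y00 eps0; have c0 : 0 < abs y0 := abs_gt0 y00.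
have x0c : 0 < abs x0 + abs y0 by have := abs_ge0 x0; lra.
pose d := Num.min (abs y0) (eps * (abs y0 * abs y0) / (abs x0 + abs y0)).
have dc : d <= abs y0 by rewrite ge_min lexx.
have dx0 : d * (abs x0 + abs y0) <= eps * (abs y0 * abs y0).
  by rewrite -ler_pdivlMr // ge_min lexx orbT.
exists d => [|x y xd yd]; first by rewrite lt_min c0 /=; apply: divr_gt0 => //; rewrite !mulr_gt0.
have yc : abs y = abs y0 by apply: abs_eq_of_lt; apply: lt_le_trans yd dc.
have y0' : y != 0 by rewrite -abs_eq0 yc gt_eqF.
split => //.
have -> : x / y - x0 / y0 = ((x - x0) * y0 - x0 * (y - y0)) / (y * y0) by field; rewrite y0' y00.
rewrite absM absV absM yc ltr_pdivrMr ?mulr_gt0 //.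
have x0_ge0 := abs_ge0 x0; have dx_ge0 := abs_ge0 (x - x0); have dy_ge0 := abs_ge0 (y - y0).
by apply: abs_add_lt; rewrite ?absN absM; nra.
Qed.

Lemma rat_approx_meval n (P : {mpoly K[n]}) (u : 'I_n -> K) eta : 0 < eta ->
  exists a : 'I_n -> rat, abs (P.@[fun i => ratr (a i)] - P.@[u]) < eta.
Proof.
move=> /(cont_at_meval P u) [d d0 near].
have /fin_all_exists [a ua] : forall i, exists q : rat, abs (u i - ratr q) < d.
  by move=> i; apply: (Qp_Q_dense K_Qp).
by exists a; apply: near => i; rewrite absB.
Qed.

Lemma mpoly_value_ratios_dense n (L C : {mpoly K[n]}) (y : 'I_n -> K) (j : 'I_n) :
  L \is 1.-homog -> L@_U_(j) != 0 -> L.@[y] = 0 -> C.@[y] != 0 ->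
  forall z eps, 0 < eps -> exists u v,
    (L * C).@[v] != 0 /\ abs ((L * C).@[u] / (L * C).@[v] - z) < eps.
Proof.
move=> L1 Lj Ly Cy z eps eps0.
have [d d0 near] := div_near (z * C.@[y]) Cy eps0.
have [e e0 nearC] := cont_at2 (cont_at_meval (z *: C) y) (cont_at_meval C y) d0 d0.
have z1 : 0 < abs z + 1 by have := abs_ge0 z; lra.
have [s s0 se] := exists_abs_lt (divr_gt0 e0 z1).
rewrite ltr_pdivlMr // in se.
pose shift t i := y i + (if i == j then t else 0).
have shift_near t : abs t < e -> forall i, abs (shift t i - y i) < e.
  by move=> te i; rewrite /shift addrC addKr; case: eqP => // _; rewrite abs0.
have L_shift t : L.@[shift t] = L@_U_(j) * t.
  rewrite meval_dhomog1 //; under eq_bigr do rewrite mulrDr.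
  rewrite big_split /= -meval_dhomog1 // Ly add0r (bigD1 j) //= eqxx big1 ?addr0 //.
  by move=> i /negbTE ->; rewrite mulr0.
have s_ge0 := abs_ge0 s; have z_ge0 := abs_ge0 z.
have sze : abs (s * z) < e by rewrite absM; nra.
have se' : abs s < e by nra.
have [zCu _] := nearC _ (shift_near _ sze).
have [_ Cv] := nearC _ (shift_near _ se').
rewrite !mevalZ in zCu.
have [Cv0 ratio] := near _ _ zCu Cv.
exists (shift (s * z)), (shift s); rewrite !mevalM !L_shift.
split; first by rewrite !mulf_neq0.
have -> : L@_U_(j) * (s * z) * C.@[shift (s * z)] / (L@_U_(j) * s * C.@[shift s]) =
    z * C.@[shift (s * z)] / C.@[shift s] by field; rewrite Cv0 s0 Lj.
by rewrite mulfK in ratio.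
Qed.

Lemma value_ratios_at_rational_points n (P : {mpoly K[n]}) u v eps :
  P.@[v] != 0 -> 0 < eps -> exists a b : 'I_n -> rat,
    P.@[fun i => ratr (b i)] != 0 /\
    abs (P.@[fun i => ratr (a i)] / P.@[fun i => ratr (b i)] - P.@[u] / P.@[v]) < eps.
Proof.
move=> Pv eps0; have [d d0 near] := div_near (P.@[u]) Pv eps0.
have [a Pa] := rat_approx_meval P u d0; have [b Pb] := rat_approx_meval P v d0.
by exists a, b; apply: near.
Qed.

End PadicField.

Unset Implicit Arguments.

Theorem lemma2p10 (p : nat) (K : fieldType) (abs : K -> rat)
  (hp : prime p) (hK : is_Qp p abs)
  (r : nat) (F : {mpoly int[r.+1]})
  (hF : exists d : nat, F \is d.-homog)
  (hL : exists L : {mpoly K[r.+1]},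
      [/\ L != 0, L \is 1.-homog,
          mdivides L (map_mpoly (fun z : int => (z%:~R : K)) F)
        & ~ mdivides (L ^+ 2) (map_mpoly (fun z : int => (z%:~R : K)) F)]) :
  dense_in abs (ratio_set F).
Proof.
have K0 := Qp_pchar0 hp hK.
case: hF => d Fd; case: hL => L [L0 L1 [C FLC] LLnF].
have LnC : ~ mdivides L C.
  by case=> D CD; apply: LLnF; exists D; rewrite FLC CD expr2 mulrA.
have [y [j [Lj Ly Cy]]] := pchar0_linear_root_nonroot K0 L1 L0 LnC.
move=> z eps eps0.
have [u [v []]] := mpoly_value_ratios_dense hp hK L1 Lj Ly Cy z eps0.
rewrite -FLC; set FK := map_mpoly _ F => Fv uvz.
have [a [b [Fb abuv]]] := value_ratios_at_rational_points hK u Fv eps0.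
have ratr_FQ := pchar0_ratr_meval K0 F.
set FQ := map_mpoly _ F in ratr_FQ.
have FQb : FQ.@[b] != 0.
  by apply: contra_neq Fb; rewrite -ratr_FQ => ->; rewrite (rmorph0 (pchar0_ratr K0)).
exists (FQ.@[a] / FQ.@[b]); split; first exact: ratio_set_dhomog Fd FQb.
rewrite -[ratr _]/(pchar0_ratr K0 _) fmorph_div /= !ratr_FQ.
rewrite -[z](subrK (FK.@[u] / FK.@[v])) -addrA.
by apply: (abs_add_lt hK); rewrite (absB hK).
Qed.
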